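(* Let $m\ge 2$, $h\ge 1$ be integers and $q=2^m$. Index the coordinates of vectors in $\mathrm{GF}(2^h)^{q+1}$ by the points of the projective line $\mathrm{PG}(1,q)=\mathrm{GF}(q)\cup\{\infty\}$, and let $\mathrm{PGL}_2(\mathrm{GF}(q))$ act on $\mathrm{GF}(2^h)^{q+1}$ by $\pi:(c_x)_{x\in \mathrm{PG}(1,q)}\mapsto (c_{\pi(x)})_{x\in\mathrm{PG}(1,q)}$. If $\mathcal C$ is a linear code over $\mathrm{GF}(2^h)$ of length $q+1$ that is invariant under this action (i.e. $\pi(\mathbf c)\in\mathcal C$ for all $\mathbf c\in\mathcal C$, $\pi\in\mathrm{PGL}_2(\mathrm{GF}(q))$), then $\mathcal C$ is one of the following: (I) the zero code $\{(0,\dots,0)\}$; (II) the whole space $\mathrm{GF}(2^h)^{q+1}$; (III) the repetition code $\{(c,c,\dots,c): c\in\mathrm{GF}(2^h)\}$; (IV) the code $\{(c_0,\dots,c_q)\in\mathrm{GF}(2^h)^{q+1}: c_0+\cdots+c_q=0\}$.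
   Context: $\mathrm{PGL}_2(\mathrm{GF}(q))$ acts on $\mathrm{PG}(1,q)$ by linear fractional transformations $x\mapsto \frac{ax+b}{cx+d}$ ($ad-bc\neq 0$), with the usual conventions for $\infty$. *)

From mathcomp Require Import all_boot all_algebra.
Set Implicit Arguments. Unset Strict Implicit. Unset Printing Implicit Defensive.
Import GRing.Theory.
Local Open Scope ring_scope.

(* The projective line PG(1,q) over a field K: [Some x] is x in K, [None] is infinity. *)
Notation PG1 K := (option K).

Definition lft (K : finFieldType) (a b c d : K) (x : PG1 K) : PG1 K :=
  match x with
  | Some t => if c * t + d == 0 then None else Some ((a * t + b) / (c * t + d))
  | None => if c == 0 then None else Some (a / c)
  end.

Notation word K F := {ffun option K -> F}.

Definition act_word (K F : finFieldType) (pi : PG1 K -> PG1 K) (w : word K F)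
  : word K F := [ffun x => w (pi x)].

Definition linear_code (K F : finFieldType) (C : {set word K F}) : Prop :=
  [ffun=> (0 : F)] \in C /\
  (forall (a : F) (u v : word K F), u \in C -> v \in C -> [ffun x => a * u x + v x] \in C).

Definition PGL2_invariant (K F : finFieldType) (C : {set word K F}) : Prop :=
  forall a b c d : K, a * d - b * c != 0 ->
    forall w, w \in C -> act_word (lft a b c d) w \in C.

Definition zero_code (K F : finFieldType) : {set word K F} := [set [ffun=> (0 : F)]].
Definition full_code (K F : finFieldType) : {set word K F} := [set: word K F].
Definition repetition_code (K F : finFieldType) : {set word K F} :=
  [set w : word K F | [exists c : F, w == [ffun=> c]]].
Definition even_weight_code (K F : finFieldType) : {set word K F} :=
  [set w : word K F | \sum_(x : PG1 K) w x == 0].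

From mathcomp Require Import all_boot all_algebra all_field.
Set Implicit Arguments.
Unset Strict Implicit.
Unset Printing Implicit Defensive.
Import GRing.Theory.
Local Open Scope ring_scope.

(* If every word of C is constant, C is the zero or the repetition code.
   Otherwise some word w of C has a coordinate w_y different from its total
   sum; moving y to infinity and adding up all translates x |-> x + t of the
   resulting word gives, since q = 0 in GF(2^h), a nonzero multiple of the
   word that is 1 on GF(q) and 0 at infinity.  Its images under PGL_2(q)
   are the words 1 - e_y, which span the even-weight code; a linear code
   containing the even-weight code is that code or the whole space. *)

Section LinearCode.
Variables (K F : finFieldType) (C : {set word K F}).
Hypothesis C_lin : linear_code C.

Lemma code0 : 0 \in C.
Proof. by case: C_lin. Qed.

Lemma codeD u v : u \in C -> v \in C -> u + v \in C.
Proof.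
case: C_lin => _ C_comb uC vC; have := C_comb 1 u v uC vC.
by congr (_ \in C); apply/ffunP => x; rewrite !ffunE mul1r.
Qed.

Lemma codeZ a u : u \in C -> [ffun x => a * u x] \in C.
Proof.
case: C_lin => C0 C_comb uC; have := C_comb a u _ uC C0.
by congr (_ \in C); apply/ffunP => x; rewrite !ffunE addr0.
Qed.

Lemma code_sum (I : finType) (f : I -> word K F) :
  (forall i, f i \in C) -> \sum_i f i \in C.
Proof.
by move=> fC; apply: (big_ind (fun w => w \in C)); [exact: code0|exact: codeD|].
Qed.

Lemma code_constant :
  (forall w x, w \in C -> w x = w None) ->
  C = zero_code K F \/ C = repetition_code K F.
Proof.
move=> C_const.
case: (boolP [forall w in C, w == 0]) => [/forall_inP C_zero|].
  left; apply/setP => v; rewrite inE.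
  by apply/idP/eqP => [/C_zero/eqP|->] //; exact: code0.
rewrite negb_forall_in => /existsP [u /andP [uC u_nz]].
have {u_nz} u_nz : u None != 0.
  apply: contraNneq u_nz => u0; apply/eqP/ffunP => x.
  by rewrite ffunE (C_const u) ?u0.
right; apply/setP => v; rewrite inE.
apply/idP/existsP => [vC | [c /eqP ->]].
  by exists (v None); apply/eqP/ffunP => x; rewrite ffunE C_const.
have := codeZ (c / u None) uC; congr (_ \in C); apply/ffunP => x.
by rewrite !ffunE C_const // divfK.
Qed.

Lemma even_weight_sub_code :
  even_weight_code K F \subset C ->
  C = even_weight_code K F \/ C = full_code K F.
Proof.
move=> /subsetP evenC.
have [C_even|] := boolP [forall w in C, w \in even_weight_code K F].
  by left; apply/setP => v; apply/idP/idP => [/(forall_inP C_even)|/evenC].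
rewrite negb_forall_in => /existsP [u /andP [uC]]; rewrite inE => su_nz.
right; apply/setP => v; rewrite inE.
pose k := (\sum_x v x) / \sum_x u x.
have -> : v = [ffun x => k * u x] + (v - [ffun x => k * u x]).
  by rewrite addrC subrK.
apply: codeD; first exact: codeZ.
apply: evenC; rewrite inE; under eq_bigr do rewrite !ffunE.
by rewrite sumrB -mulr_sumr divfK // subrr.
Qed.

End LinearCode.

Section ProjectiveLine.
Variable K : finFieldType.

Definition shift (t : K) : PG1 K -> PG1 K := omap (fun x => x + t).

Definition inversion (x : PG1 K) : PG1 K :=
  if x is Some t then (if t == 0 then None else Some t^-1) else Some 0.

Definition swap_inf (y : PG1 K) : PG1 K -> PG1 K :=
  if y is Some y0 then shift y0 \o inversion \o shift (- y0) else id.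

Lemma lft_shift t : lft 1 t 0 1 =1 shift t.
Proof.
by case=> [x|] /=; rewrite ?eqxx // mul0r add0r oner_eq0 mul1r divr1.
Qed.

Lemma lft_inversion : lft 0 1 1 0 =1 inversion.
Proof.
by case=> [x|] /=; rewrite ?oner_eq0 ?mul0r ?mul1r ?add0r ?addr0 ?div1r.
Qed.

Lemma shiftK t : cancel (shift t) (shift (- t)).
Proof. by case=> [x|] //=; rewrite addrK. Qed.

Lemma inversionK : involutive inversion.
Proof.
case=> [x|] /=; last by rewrite eqxx.
have [->|x_nz] := eqVneq x 0;
  by rewrite /= ?eqxx ?invr_eq0 ?(negPf x_nz) ?invrK.
Qed.

Lemma swap_infK y : involutive (swap_inf y).
Proof.
case: y => [y0|] // x.
by rewrite /= (shiftK y0) inversionK -{1}(opprK y0) shiftK.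
Qed.

Lemma swap_inf_None y : swap_inf y None = y.
Proof. by case: y => [y0|] //=; rewrite add0r. Qed.

End ProjectiveLine.

Arguments inversion {K}.

Lemma sum_option (T : finType) (V : nmodType) (f : option T -> V) :
  \sum_x f x = f None + \sum_t f (Some t).
Proof.
rewrite (bigD1 None) //=; congr (_ + _).
rewrite (reindex_omap Some id) => [|[t|] //].
by apply: eq_bigl => t; rewrite /= eqxx.
Qed.

Section Words.
Variables K F : finFieldType.

Definition all_ones_but (y : PG1 K) : word K F := [ffun x => (x != y)%:R].

Lemma act_word_comp (pi sigma : PG1 K -> PG1 K) (w : word K F) :
  act_word (pi \o sigma) w = act_word sigma (act_word pi w).
Proof. by apply/ffunP => x; rewrite !ffunE. Qed.

Lemma sum_act_word (pi : PG1 K -> PG1 K) (w : word K F) :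
  injective pi -> \sum_x act_word pi w x = \sum_x w x.
Proof.
move=> pi_inj; rewrite [RHS](reindex_inj pi_inj).
by apply: eq_bigr => x _; rewrite ffunE.
Qed.

Lemma act_swap_inf_all_ones_but y :
  act_word (swap_inf y) (all_ones_but None) = all_ones_but y.
Proof.
by apply/ffunP => x; rewrite !ffunE (inv_eq (swap_infK y)) swap_inf_None.
Qed.

Lemma sum_shifts (w : word K F) : #|K|%:R = 0 :> F ->
  \sum_t act_word (shift t) w =
  [ffun x => (\sum_t w (Some t)) * all_ones_but None x].
Proof.
move=> qF0; apply/ffunP => -[x|]; rewrite sum_ffunE !ffunE /= ?mulr1 ?mulr0.
  by under eq_bigr do rewrite ffunE /=; rewrite [RHS](reindex_inj (addrI x)).
under eq_bigr do rewrite ffunE /=.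
by rewrite sumr_const -mulr_natr qF0 mulr0.
Qed.

Lemma even_weight_span (v : word K F) : \sum_x v x = 0 ->
  v = \sum_y [ffun x => - v y * all_ones_but y x].
Proof.
move=> v_even; apply/ffunP => x; rewrite sum_ffunE.
under eq_bigr do rewrite !ffunE.
rewrite (bigD1 x) //= eqxx mulr0 add0r.
under eq_bigr => y /negPf y_x do rewrite eq_sym y_x mulr1.
by move/eqP: v_even; rewrite (bigD1 x) //= addr_eq0 sumrN => /eqP.
Qed.

End Words.

Arguments all_ones_but {K F}.

Section InvariantCode.
Variables (K F : finFieldType) (C : {set word K F}).
Hypotheses (C_lin : linear_code C) (C_inv : PGL2_invariant C).

Lemma code_shift t w : w \in C -> act_word (shift t) w \in C.
Proof.
move=> wC; have := C_inv (a := 1) (b := t) (c := 0) (d := 1).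
rewrite mulr0 subr0 mul1r oner_eq0 => /(_ isT w wC).
by congr (_ \in C); apply/ffunP => x; rewrite !ffunE lft_shift.
Qed.

Lemma code_inversion w : w \in C -> act_word inversion w \in C.
Proof.
move=> wC; have := C_inv (a := 0) (b := 1) (c := 1) (d := 0).
rewrite mulr0 mul1r sub0r oppr_eq0 oner_eq0 => /(_ isT w wC).
by congr (_ \in C); apply/ffunP => x; rewrite !ffunE lft_inversion.
Qed.

Lemma code_swap_inf y w : w \in C -> act_word (swap_inf y) w \in C.
Proof.
case: y => [y0|] wC /=.
  by rewrite !act_word_comp code_shift ?code_inversion ?code_shift.
by congr (_ \in C): wC; apply/ffunP => x; rewrite ffunE.
Qed.

Hypothesis qF0 : #|K|%:R = 0 :> F.

Lemma all_ones_but_in w :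
  w \in C -> \sum_t w (Some t) != 0 -> forall y, all_ones_but y \in C.
Proof.
move=> wC s_nz y; rewrite -act_swap_inf_all_ones_but; apply: code_swap_inf.
have shifts_in := code_sum C_lin (fun t => code_shift t wC).
have := codeZ C_lin (\sum_t w (Some t))^-1 shifts_in.
congr (_ \in C); apply/ffunP => x.
by rewrite sum_shifts // !ffunE mulrA mulVf ?mul1r.
Qed.

Lemma even_weight_sub_code_of_nonconstant w x1 x2 :
  w \in C -> w x1 != w x2 -> even_weight_code K F \subset C.
Proof.
move=> wC w12.
have [y wy] : exists y, w y != \sum_x w x.
  have [w1|] := eqVneq (w x1) (\sum_x w x); last by exists x1.
  by exists x2; rewrite -w1 eq_sym.
pose w' := act_word (swap_inf y) w.
have w'C : w' \in C by exact: code_swap_inf.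
have s'_nz : \sum_t w' (Some t) != 0.
  have := sum_act_word w (inv_inj (swap_infK y)).
  rewrite -/w' sum_option ffunE swap_inf_None => sum_w'.
  by apply: contraNneq wy => s'0; rewrite -sum_w' s'0 addr0.
apply/subsetP => v; rewrite inE => /eqP /even_weight_span ->.
apply: (code_sum C_lin) => z.
exact/(codeZ C_lin (- v z))/(all_ones_but_in w'C s'_nz).
Qed.

End InvariantCode.

Theorem theorem11 (m h : nat) (K F : finFieldType) :
  (2 <= m)%N -> (1 <= h)%N -> #|K| = (2 ^ m)%N -> #|F| = (2 ^ h)%N ->
  forall C : {set word K F},
    linear_code C -> PGL2_invariant C ->
    [\/ C = zero_code K F, C = full_code K F, C = repetition_code K F
      | C = even_weight_code K F].
Proof.
move=> m_ge2 _ cardK cardF C C_lin C_inv.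
have qF0 : #|K|%:R = 0 :> F.
  have char2 : 2 \in [pchar F] by apply: card_finPcharP cardF _.
  case: m m_ge2 cardK => // m _ ->.
  by rewrite natrX (pcharf0 char2) exprS mul0r.
have [|C_const] := boolP [exists w in C, exists x, w x != w None].
  case/exists_inP => w wC /existsP [x wx].
  have := even_weight_sub_code_of_nonconstant C_lin C_inv qF0 wC wx.
  by case/(even_weight_sub_code C_lin) => ->; [apply: Or44 | apply: Or42].
have [w x wC | -> | ->] := code_constant C_lin; [|exact: Or41|exact: Or43].
apply/eqP; apply: contraNT C_const => wx.
by apply/exists_inP; exists w => //; apply/existsP; exists x.
Qed.
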